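(* Let $N$ denote the smallest $k\ge 1$ such that $w_1$ and $w_{k+1}$ belong to the same class. Then for each $1\le i\le M$, $$E\left(h_{N-1}\mid w_1\in C_i\right)=-\log(p_i),$$ and consequently $\hat H_2=h_{N-1}$ is an unbiased estimator of the Shannon entropy: $$E(h_{N-1})=-\sum_{i=1}^M p_i\log(p_i).$$
   Context: Let $w_1,w_2,\dots$ be an infinite sequence of independent, identically distributed samples. Each sample belongs to exactly one of $M$ classes $C_1,\dots,C_M$, and $\Pr(w_k\in C_i)=p_i$, where $0<p_i\le 1$ and $\sum_{i=1}^M p_i=1$. The logarithm is the natural logarithm. The harmonic numbers are $h_n=\sum_{k=1}^n 1/k$ for $n\ge 1$, with $h_0=0$. *)

From Stdlib Require Import Reals List Arith.
Import ListNotations.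
Open Scope R_scope.

(* Classes C_1..C_M are encoded as natural numbers 0..M-1; a sample path
   w_1, w_2, ... is encoded as a function w : nat -> nat with w_{j+1} = w j. *)

Definition harmonic (n : nat) : R :=
  fold_right (fun k acc => / INR k + acc) 0 (seq 1 n).

Fixpoint words (M n : nat) : list (list nat) :=
  match n with
  | O => [nil]
  | S n' => flat_map (fun c => map (cons c) (words M n')) (seq 0 M)
  end.

Definition word_prob (p : nat -> R) (w : list nat) : R :=
  fold_right (fun c acc => p c * acc) 1 w.

(* Probability, under the i.i.d. law, of an event E on sample paths that depends
   only on the first n samples (a cylinder event): sum over all prefixes. *)
Definition Pr_cyl (M : nat) (p : nat -> R) (n : nat) (E : (nat -> nat) -> bool) : R :=
  fold_right Rplus 0
    (map (fun w => if E (fun j => nth j w 0%nat) then word_prob p w else 0) (words M n)).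

(* The event {N = k}: k is the smallest k >= 1 with w_{k+1} in the class of w_1,
   i.e. (0-indexed) w k = w 0 and w j <> w 0 for 1 <= j < k.
   It depends only on the first k+1 samples. *)
Definition N_eq (k : nat) (w : nat -> nat) : bool :=
  (1 <=? k)%nat && Nat.eqb (w k) (w 0%nat)
  && forallb (fun j => negb (Nat.eqb (w j) (w 0%nat))) (seq 1 (k - 1)).

Definition N_eq_cls (k i : nat) (w : nat -> nat) : bool :=
  N_eq k w && Nat.eqb (w 0%nat) i.

Definition sumM (M : nat) (f : nat -> R) : R :=
  fold_right (fun i acc => f i + acc) 0 (seq 0 M).

From Stdlib Require Import Reals List Lra Lia Bool.
From Coquelicot Require Import Coquelicot.
Open Scope R_scope.

(* Given w_1 in C_i, the waiting time N is geometric: P(N = m + 1, w_1 in C_i) = p_i^2 (1 - p_i)^m,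
   so it remains to sum h_m q^m with q = 1 - p_i.  Since h_(m+1) q^(m+1) is the m-th coefficient of
   the Cauchy product of the Mercator series sum_(k >= 1) q^k / k = - ln (1 - q) with the geometric
   series sum_j q^j = 1 / (1 - q), the sum is - ln p_i / p_i; averaging over the classes gives
   the entropy. *)

Definition lsum {A} (l : list A) (f : A -> R) : R := fold_right Rplus 0 (map f l).

Lemma lsum_cons {A} (a : A) l f : lsum (a :: l) f = f a + lsum l f.
Proof. reflexivity. Qed.

Lemma lsum_app {A} (l1 l2 : list A) f : lsum (l1 ++ l2) f = lsum l1 f + lsum l2 f.
Proof. unfold lsum; induction l1; simpl; [lra|rewrite IHl1; lra]. Qed.

Lemma lsum_flat_map {A B} (g : A -> list B) l f :
  lsum (flat_map g l) f = lsum l (fun a => lsum (g a) f).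
Proof. induction l; simpl; [reflexivity|]. rewrite lsum_app, IHl. reflexivity. Qed.

Lemma lsum_map {A B} (g : A -> B) l f : lsum (map g l) f = lsum l (fun a => f (g a)).
Proof. unfold lsum; now rewrite map_map. Qed.

Lemma lsum_ext_in {A} (l : list A) f g :
  (forall x, In x l -> f x = g x) -> lsum l f = lsum l g.
Proof. intros H; unfold lsum; now rewrite (map_ext_in _ _ _ H). Qed.

Lemma lsum_scal_l {A} (l : list A) a f : lsum l (fun x => a * f x) = a * lsum l f.
Proof. unfold lsum; induction l; simpl; [lra|rewrite IHl; lra]. Qed.

Lemma lsum_opp {A} (l : list A) f : lsum l (fun x => - f x) = - lsum l f.
Proof. unfold lsum; induction l; simpl; [lra|rewrite IHl; lra]. Qed.

Lemma lsum_plus {A} (l : list A) f g : lsum l (fun x => f x + g x) = lsum l f + lsum l g.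
Proof. unfold lsum; induction l; simpl; [lra|rewrite IHl; lra]. Qed.

Lemma lsum_0 {A} (l : list A) : lsum l (fun _ => 0) = 0.
Proof. unfold lsum; induction l; simpl; [|rewrite IHl]; lra. Qed.

Lemma sumM_lsum M f : sumM M f = lsum (seq 0 M) f.
Proof. unfold sumM, lsum. induction (seq 0 M); simpl; congruence. Qed.

Lemma lsum_seq_indicator (f : nat -> R) s n i : (s <= i < s + n)%nat ->
  lsum (seq s n) (fun c => if Nat.eqb c i then f c else 0) = f i.
Proof.
  revert s; induction n as [|n IH]; intros s Hi; [lia|].
  rewrite <- cons_seq, lsum_cons.
  destruct (Nat.eqb_spec s i) as [->|Hs].
  - rewrite (lsum_ext_in _ _ (fun _ => 0)), lsum_0; [lra|].
    intros x Hx. apply in_seq in Hx. destruct (Nat.eqb_spec x i); [lia|auto].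
  - rewrite IH; [lra|lia].
Qed.

Lemma Pr_cyl_lsum M p n E :
  Pr_cyl M p n E = lsum (words M n) (fun w => if E (fun j => nth j w 0%nat) then word_prob p w else 0).
Proof. reflexivity. Qed.

Lemma lsum_words_S M n F :
  lsum (words M (S n)) F = lsum (seq 0 M) (fun c => lsum (words M n) (fun w => F (c :: w))).
Proof. simpl. rewrite lsum_flat_map. apply lsum_ext_in; intros. now rewrite lsum_map. Qed.

Definition first_hit (n i : nat) (w : list nat) : bool :=
  forallb (fun j => negb (Nat.eqb (nth j w 0%nat) i)) (seq 0 n) && Nat.eqb (nth n w 0%nat) i.

Lemma forallb_map_S (f : nat -> bool) l : forallb f (map S l) = forallb (fun j => f (S j)) l.
Proof. induction l; simpl; congruence. Qed.

Lemma first_hit_S n i c w : first_hit (S n) i (c :: w) = negb (Nat.eqb c i) && first_hit n i w.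
Proof.
  unfold first_hit. rewrite <- cons_seq, <- seq_shift. simpl forallb.
  rewrite forallb_map_S. simpl. now rewrite andb_assoc.
Qed.

Lemma N_eq_cls_cons m i c w :
  N_eq_cls (S m) i (fun j => nth j (c :: w) 0%nat) = Nat.eqb c i && first_hit m i w.
Proof.
  unfold N_eq_cls, N_eq, first_hit. simpl. rewrite Nat.sub_0_r, <- seq_shift, forallb_map_S.
  destruct (Nat.eqb_spec c i) as [<-|]; simpl.
  - now rewrite andb_true_r, andb_comm.
  - now rewrite andb_false_r.
Qed.

Lemma N_eq_cons m c w : N_eq (S m) (fun j => nth j (c :: w) 0%nat) = first_hit m c w.
Proof.
  unfold N_eq, first_hit. simpl. rewrite Nat.sub_0_r, <- seq_shift, forallb_map_S.
  simpl. apply andb_comm.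
Qed.

Section IidWords.

Variable M : nat.
Variable p : nat -> R.
Hypothesis hsum : sumM M p = 1.

Lemma lsum_classes_neq i : (i < M)%nat ->
  lsum (seq 0 M) (fun c => if Nat.eqb c i then 0 else p c) = 1 - p i.
Proof.
  intros Hi. rewrite <- hsum, sumM_lsum, <- (lsum_seq_indicator p 0 M i) by lia.
  rewrite (lsum_ext_in _ p (fun c => (if Nat.eqb c i then 0 else p c)
                                   + (if Nat.eqb c i then p c else 0))).
  - rewrite lsum_plus. lra.
  - intros c _. destruct (Nat.eqb c i); lra.
Qed.

Lemma Pr_first_hit n i : (i < M)%nat ->
  lsum (words M (S n)) (fun w => if first_hit n i w then word_prob p w else 0)
  = p i * (1 - p i) ^ n.
Proof.
  intros Hi. induction n as [|n IH]; rewrite lsum_words_S.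
  - rewrite pow_O, Rmult_1_r, <- (lsum_seq_indicator p 0 M i) by lia.
    apply lsum_ext_in; intros c _. unfold first_hit, lsum; simpl.
    destruct (Nat.eqb c i); lra.
  - rewrite (lsum_ext_in _ _ (fun c => (if Nat.eqb c i then 0 else p c) * (p i * (1 - p i) ^ n))).
    + rewrite (lsum_ext_in _ _ (fun c => (p i * (1 - p i) ^ n) * (if Nat.eqb c i then 0 else p c)))
        by (intros; ring).
      rewrite lsum_scal_l, lsum_classes_neq by exact Hi. simpl. ring.
    + intros c _. rewrite <- IH, <- lsum_scal_l. apply lsum_ext_in; intros w _.
      rewrite first_hit_S. simpl word_prob. destruct (Nat.eqb c i); simpl; [lra|].
      destruct (first_hit n i w); lra.
Qed.

Lemma Pr_N_eq_cls m i : (i < M)%nat ->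
  Pr_cyl M p (S (S m)) (N_eq_cls (S m) i) = p i * (p i * (1 - p i) ^ m).
Proof.
  intros Hi. rewrite Pr_cyl_lsum, lsum_words_S, <- (Pr_first_hit m i Hi), <- lsum_scal_l.
  rewrite <- (lsum_seq_indicator (fun c => lsum (words M (S m))
     (fun w => p c * (if first_hit m c w then word_prob p w else 0))) 0 M i) by lia.
  apply lsum_ext_in; intros c _. destruct (Nat.eqb_spec c i) as [<-|Hci].
  - apply lsum_ext_in; intros w _. rewrite N_eq_cls_cons, Nat.eqb_refl. simpl.
    destruct (first_hit m c w); lra.
  - apply Nat.eqb_neq in Hci.
    rewrite (lsum_ext_in _ _ (fun _ => 0)), lsum_0; [reflexivity|].
    intros w _. now rewrite N_eq_cls_cons, Hci.
Qed.

Lemma Pr_N_eq m :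
  Pr_cyl M p (S (S m)) (N_eq (S m)) = lsum (seq 0 M) (fun c => p c * (p c * (1 - p c) ^ m)).
Proof.
  rewrite Pr_cyl_lsum, lsum_words_S. apply lsum_ext_in; intros c Hc. apply in_seq in Hc.
  rewrite <- (Pr_first_hit m c) by lia. rewrite <- lsum_scal_l.
  apply lsum_ext_in; intros w _. rewrite N_eq_cons. simpl. destruct (first_hit m c w); lra.
Qed.

End IidWords.

Lemma harmonic_S n : harmonic (S n) = harmonic n + / INR (S n).
Proof.
  unfold harmonic. rewrite seq_S, fold_right_app. simpl.
  induction (seq 1 n) as [|k l IH]; simpl; [lra|]. rewrite IH. lra.
Qed.

Definition log_partial (q : R) (n : nat) : R :=
  sum_f_R0 (fun k => q ^ S k / INR (S k)) n.

Lemma log_partial_0 n : log_partial 0 n = 0.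
Proof.
  induction n; unfold log_partial in *; cbn [sum_f_R0];
    [|rewrite IHn]; rewrite pow_i by lia; unfold Rdiv; ring.
Qed.

Lemma is_derive_log_partial n y :
  is_derive (fun y => log_partial y n) y (sum_f_R0 (fun k => y ^ k) n).
Proof.
  unfold log_partial; induction n; cbn [sum_f_R0].
  - auto_derive; [auto|]. field.
  - apply (is_derive_plus (fun y => sum_f_R0 (fun k => y ^ S k / INR (S k)) n)
             (fun y => y ^ S (S n) / INR (S (S n)))); [exact IHn|].
    auto_derive; [auto|].
    change (1 * (INR (S (S n)) * (y * y ^ n)) * / INR (S (S n)) = y ^ S n).
    cbn [pow]. field. apply not_0_INR; lia.
Qed.

Lemma is_derive_log_partial_error n y : y < 1 ->
  is_derive (fun y => log_partial y n + ln (1 - y)) y (- (y ^ S n / (1 - y))).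
Proof.
  intros Hy.
  replace (- (y ^ S n / (1 - y))) with (sum_f_R0 (fun k => y ^ k) n + - / (1 - y))
    by (rewrite tech3 by lra; field; lra).
  apply (is_derive_plus (fun y => log_partial y n) (fun y => ln (1 - y)));
    [apply is_derive_log_partial|].
  auto_derive; [lra|]. field. lra.
Qed.

Lemma log_partial_error q n : 0 <= q < 1 ->
  Rabs (log_partial q n + ln (1 - q)) <= q ^ S n / (1 - q).
Proof.
  intros Hq.
  destruct (MVT_gen (fun y => log_partial y n + ln (1 - y)) 0 q
              (fun y => - (y ^ S n / (1 - y)))) as [c [Hc Hmvt]].
  - intros x Hx. rewrite Rmin_left, Rmax_right in Hx by lra.
    apply is_derive_log_partial_error; lra.
  - intros x Hx. rewrite Rmin_left, Rmax_right in Hx by lra.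
    apply continuity_pt_filterlim, (ex_derive_continuous (fun y => log_partial y n + ln (1 - y))).
    eexists. apply is_derive_log_partial_error. lra.
  - rewrite Rmin_left, Rmax_right in Hc by lra.
    rewrite log_partial_0, Rminus_0_r, ln_1, !Rplus_0_r, Rminus_0_r in Hmvt.
    assert (c ^ S n <= q ^ S n) by (apply pow_incr; lra).
    assert (/ (1 - c) <= / (1 - q)) by (apply Rinv_le_contravar; lra).
    assert (0 <= c ^ S n) by (apply pow_le; lra).
    assert (0 <= / (1 - c)) by (apply Rlt_le, Rinv_0_lt_compat; lra).
    assert (Hratio : 0 <= c ^ S n / (1 - c) <= q ^ S n / (1 - q)).
    { split; [apply Rmult_le_pos; lra|apply Rmult_le_compat; lra]. }
    rewrite Hmvt, Rminus_0_r, Rabs_mult, Rabs_Ropp, (Rabs_right q), Rabs_right by lra.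
    rewrite <- (Rmult_1_r (q ^ S n / (1 - q))). apply Rmult_le_compat; lra.
Qed.

Lemma is_series_log q : 0 <= q < 1 ->
  is_series (fun k => q ^ S k / INR (S k)) (- ln (1 - q)).
Proof.
  intros Hq. apply is_series_Reals, is_lim_seq_Reals.
  change (is_lim_seq (log_partial q) (- ln (1 - q))).
  assert (Herr : is_lim_seq (fun n => q ^ S n / (1 - q)) 0).
  { apply (is_lim_seq_ext (fun n => (q / (1 - q)) * q ^ n)); [intros n; simpl; field; lra|].
    replace (Finite 0) with (Rbar_mult (q / (1 - q)) 0) by (simpl; f_equal; ring).
    apply is_lim_seq_scal_l, is_lim_seq_geom. rewrite Rabs_right; lra. }
  apply (is_lim_seq_le_le (fun n => - ln (1 - q) - q ^ S n / (1 - q)) _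
                          (fun n => - ln (1 - q) + q ^ S n / (1 - q))).
  - intros n. pose proof (log_partial_error q n Hq) as H. apply Rabs_le_between in H. lra.
  - replace (Finite (- ln (1 - q))) with (Rbar_minus (- ln (1 - q)) 0) by (simpl; f_equal; ring).
    apply is_lim_seq_minus'; [apply is_lim_seq_const|exact Herr].
  - replace (Finite (- ln (1 - q))) with (Rbar_plus (- ln (1 - q)) 0) by (simpl; f_equal; ring).
    apply is_lim_seq_plus'; [apply is_lim_seq_const|exact Herr].
Qed.

Lemma harmonic_pow_cauchy q n :
  harmonic (S n) * q ^ S n = sum_f_R0 (fun k => q ^ S k / INR (S k) * q ^ (n - k)) n.
Proof.
  induction n as [|n IH].
  - unfold harmonic. simpl. field.
  - rewrite tech5, Nat.sub_diag.
    rewrite (sum_eq _ (fun k => q ^ S k / INR (S k) * q ^ (n - k) * q)).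
    2:{ intros k Hk. replace (S n - k)%nat with (S (n - k)) by lia. simpl. ring. }
    rewrite <- scal_sum, <- IH, harmonic_S. cbn [pow]. field. apply not_0_INR; lia.
Qed.

Lemma is_series_harmonic_pow q : 0 <= q < 1 ->
  is_series (fun m => harmonic m * q ^ m) (- ln (1 - q) * / (1 - q)).
Proof.
  intros Hq. apply is_series_decr_1.
  replace (plus _ (opp (harmonic 0 * q ^ 0))) with (- ln (1 - q) * / (1 - q))
    by (cbv [harmonic fold_right seq plus opp]; simpl; ring).
  apply (is_series_ext (fun n => sum_f_R0 (fun k => q ^ S k / INR (S k) * q ^ (n - k)) n));
    [intros n; symmetry; apply harmonic_pow_cauchy|].
  apply is_series_mult_pos.
  - now apply is_series_log.
  - apply is_series_geom. rewrite Rabs_right; lra.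
  - intros k. apply Rmult_le_pos; [apply pow_le; lra|].
    apply Rlt_le, Rinv_0_lt_compat, lt_0_INR; lia.
  - intros k. apply pow_le; lra.
Qed.

Lemma is_series_harmonic_geometric x : 0 < x <= 1 ->
  is_series (fun m => harmonic m * (x * (1 - x) ^ m)) (- ln x).
Proof.
  intros Hx.
  replace (- ln x) with (x * (- ln (1 - (1 - x)) * / (1 - (1 - x))))
    by (replace (1 - (1 - x)) with x by ring; field; lra).
  apply (is_series_ext (fun m => x * (harmonic m * (1 - x) ^ m))); [intros m; change (?a = ?b) with (@eq R a b); ring|].
  apply (is_series_scal_l (V := R_NormedModule)), is_series_harmonic_pow. lra.
Qed.

Lemma is_series_lsum {A} (l : list A) (f : A -> nat -> R) (s : A -> R) :
  (forall a, In a l -> is_series (f a) (s a)) ->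
  is_series (fun m => lsum l (fun a => f a m)) (lsum l s).
Proof.
  induction l as [|a l IH]; intros Hf.
  - apply is_series_Reals. intros eps Heps. exists 0%nat. intros n _.
    unfold lsum; simpl. rewrite sum_cte. unfold Rdist.
    rewrite Rmult_0_l, Rminus_0_r, Rabs_R0. lra.
  - apply (is_series_plus (f a) (fun m => lsum l (fun a => f a m))).
    + apply Hf. now left.
    + apply IH. intros b Hb. apply Hf. now right.
Qed.

Theorem mainTheorem2 (M : nat) (p : nat -> R)
  (hp : forall i, (i < M)%nat -> 0 < p i <= 1)
  (hsum : sumM M p = 1) :
  (forall i, (i < M)%nat ->
     infinite_sum
       (fun m => harmonic m * Pr_cyl M p (S (S m)) (N_eq_cls (S m) i) / p i)
       (- ln (p i)))
  /\
  infinite_sum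
    (fun m => harmonic m * Pr_cyl M p (S (S m)) (N_eq (S m)))
    (- sumM M (fun i => p i * ln (p i))).
Proof.
  split.
  - intros i Hi. apply is_series_Reals.
    apply (is_series_ext (fun m => harmonic m * (p i * (1 - p i) ^ m)));
      [|now apply is_series_harmonic_geometric, hp].
    intros m. change (?a = ?b) with (@eq R a b).
    rewrite Pr_N_eq_cls by assumption. field.
    apply Rgt_not_eq, hp, Hi.
  - apply is_series_Reals.
    replace (- sumM M (fun i => p i * ln (p i)))
      with (lsum (seq 0 M) (fun c => p c * - ln (p c)))
      by (rewrite sumM_lsum, <- lsum_opp; apply lsum_ext_in; intros; ring).
    apply (is_series_ext (fun m => lsum (seq 0 M)
             (fun c => p c * (harmonic m * (p c * (1 - p c) ^ m))))).
    + intros m. change (?a = ?b) with (@eq R a b).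
      rewrite Pr_N_eq by assumption. rewrite <- lsum_scal_l.
      apply lsum_ext_in; intros; ring.
    + apply (is_series_lsum (seq 0 M) (fun c m => p c * (harmonic m * (p c * (1 - p c) ^ m)))).
      intros c Hc. apply in_seq in Hc.
      apply (is_series_scal_l (V := R_NormedModule)), is_series_harmonic_geometric, hp. lia.
Qed.
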